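(* Let $F:\mathbb{R}^n\to\mathbb{R}$ be convex and $1$-smooth, let $x^\star$ be a minimizer of $F$ and $F^\star=F(x^\star)$. Let $k\ge1$, $N=2^k-1$, and let $(h_0,\dots,h_{N-1})=\pi_k$ be the silver stepsize schedule. For $x^0\in\mathbb{R}^n$ and $x^{i+1}=x^i-h_i\nabla F(x^i)$, $i=0,\dots,N-1$, we have $$F(x^N)-F^\star\le\frac{1}{4\rho^k-2}\,\|x^0-x^\star\|^2,$$ where $\rho=1+\sqrt2$.
   Context: A differentiable convex function $F$ is $1$-smooth if $\nabla F$ is $1$-Lipschitz. The silver ratio is $\rho=1+\sqrt2$. The silver stepsize schedule $\pi_k\in\mathbb{R}^{2^k-1}$ is defined recursively by $\pi_1=(\sqrt2)$ and $\pi_{k+1}=(\pi_k,\ 1+\rho^{k-1},\ \pi_k)$ (concatenation). *)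

From HB Require Import structures.
From mathcomp Require Import all_boot all_order all_algebra.
From mathcomp Require Import all_classical all_reals all_analysis.
Set Implicit Arguments. Unset Strict Implicit. Unset Printing Implicit Defensive.
Import Order.TTheory GRing.Theory Num.Theory.
Import numFieldNormedType.Exports.
Local Open Scope ring_scope.

Definition dotv {R : realType} {n : nat} (u v : 'rV[R]_n) : R :=
  \sum_(i < n) u ord0 i * v ord0 i.
Definition enorm {R : realType} {n : nat} (u : 'rV[R]_n) : R :=
  Num.sqrt (dotv u u).

Definition silver_ratio {R : realType} : R := 1 + Num.sqrt 2.

Fixpoint silver_schedule {R : realType} (k : nat) : seq R :=
  match k with
  | 0%N => [::]
  | 1%N => [:: Num.sqrt 2]
  | k'.+1 => silver_schedule k' ++ (1 + silver_ratio ^+ k'.-1) :: silver_schedule k'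
  end.

Definition has_gradient {R : realType} {n : nat}
  (F : 'rV[R]_n -> R) (gF : 'rV[R]_n -> 'rV[R]_n) : Prop :=
  forall x, differentiable F x /\ forall v, 'd F x v = dotv v (gF x).

Definition convex_fun {R : realType} {n : nat} (F : 'rV[R]_n -> R) : Prop :=
  forall (x y : 'rV[R]_n) (t : R), 0 <= t <= 1 ->
    F ((1 - t) *: x + t *: y) <= (1 - t) * F x + t * F y.

Definition one_smooth {R : realType} {n : nat} (gF : 'rV[R]_n -> 'rV[R]_n) : Prop :=
  forall x y, enorm (gF x - gF y) <= enorm (x - y).

Fixpoint gd_iter {R : realType} {n : nat} (gF : 'rV[R]_n -> 'rV[R]_n)
  (hs : seq R) (x0 : 'rV[R]_n) (i : nat) : 'rV[R]_n :=
  match i with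
  | 0%N => x0
  | i'.+1 => let x := gd_iter gF hs x0 i' in x - nth 0 hs i' *: gF x
  end.

From HB Require Import structures.
From mathcomp Require Import all_boot all_order all_algebra.
From mathcomp Require Import all_classical all_reals all_analysis.
From mathcomp Require Import lra zify.
Import Order.TTheory GRing.Theory Num.Theory.
Import numFieldNormedType.Exports.
Local Open Scope ring_scope.

Set Implicit Arguments.
Unset Strict Implicit.
Unset Printing Implicit Defensive.

(* For a 1-smooth convex F the interpolation gaps
   Q x y = F x - F y - <gF y, x - y> - |gF x - gF y|^2 / 2 are nonnegative.  For a schedule h
   with total stepsize alpha, an explicit combination [certificate h x0] of function values and
   gradient norms along the iterates is such that, added to nonnegative multiples of gaps and
   of a square, it yields (2 alpha + 1) (F x_N - F xs) <= |x0 - xs|^2 / 2.  Gluing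
   pi_(k+1) = pi_k ++ m :: pi_k, the certificate of the whole is the certificate of the first
   half plus rho^2 times that of the second half plus nonnegative multiples of gaps; this
   exact identity is where m = 1 + rho^(k-1) and rho^2 = 2 rho + 1 are needed.  Hence the
   certificate of pi_k is nonnegative, and alpha = rho^k - 1 gives the rate. *)

Section InnerProduct.
Variables (R : realType) (n : nat).
Implicit Types (u v w : 'rV[R]_n).

Lemma dotvC u v : dotv u v = dotv v u.
Proof. by apply: eq_bigr => i _; rewrite mulrC. Qed.

Lemma dotvDl u v w : dotv (u + v) w = dotv u w + dotv v w.
Proof. by rewrite /dotv -big_split; apply: eq_bigr => i _; rewrite !mxE mulrDl. Qed.

Lemma dotvZl a u w : dotv (a *: u) w = a * dotv u w.
Proof. by rewrite /dotv mulr_sumr; apply: eq_bigr => i _; rewrite !mxE mulrA. Qed.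

Lemma dotvNl u w : dotv (- u) w = - dotv u w.
Proof. by rewrite -scaleN1r dotvZl mulN1r. Qed.

Lemma dotvBl u v w : dotv (u - v) w = dotv u w - dotv v w.
Proof. by rewrite dotvDl dotvNl. Qed.

Lemma dotv0l w : dotv 0 w = 0.
Proof. by rewrite -(scale0r 0) dotvZl mul0r. Qed.

Lemma dotvDr u v w : dotv w (u + v) = dotv w u + dotv w v.
Proof. by rewrite dotvC dotvDl !(dotvC w). Qed.

Lemma dotvZr a u w : dotv w (a *: u) = a * dotv w u.
Proof. by rewrite dotvC dotvZl dotvC. Qed.

Lemma dotvNr u w : dotv w (- u) = - dotv w u.
Proof. by rewrite dotvC dotvNl dotvC. Qed.

Lemma dotvBr u v w : dotv w (u - v) = dotv w u - dotv w v.
Proof. by rewrite dotvDr dotvNr. Qed.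

Lemma dotv0r w : dotv w 0 = 0.
Proof. by rewrite dotvC dotv0l. Qed.

Lemma dotvv_ge0 u : 0 <= dotv u u.
Proof. by apply: sumr_ge0 => i _; rewrite -expr2 sqr_ge0. Qed.

Lemma dotvv_eq0 u : dotv u u = 0 -> u = 0.
Proof.
move/eqP; rewrite psumr_eq0 => [/allP u0|i _]; last by rewrite -expr2 sqr_ge0.
apply/rowP => i; rewrite mxE.
by have := u0 i (mem_index_enum _); rewrite /= mulf_eq0 orbb => /eqP.
Qed.

Lemma sqr_enorm u : enorm u ^+ 2 = dotv u u.
Proof. by rewrite sqr_sqrtr // dotvv_ge0. Qed.

Lemma dotv_le_of_dotvv_le u w t : 0 < t ->
  dotv w w <= t ^+ 2 * dotv u u -> dotv u w <= t * dotv u u.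
Proof.
move=> t_gt0 ww_le; rewrite -(ler_pM2l t_gt0).
have := dotvv_ge0 (t *: u - w).
rewrite !(dotvBl, dotvBr, dotvZl, dotvZr) (dotvC w u).
by rewrite expr2 in ww_le; lra.
Qed.

End InnerProduct.

Section SmoothConvex.
Variables (R : realType) (n : nat) (F : 'rV[R]_n -> R) (gF : 'rV[R]_n -> 'rV[R]_n).
Hypothesis F_grad : has_gradient F gF.

Lemma is_derive_along (y d : 'rV[R]_n) (t : R) :
  is_derive t 1 (fun s : R => F (y + s *: d)) (dotv d (gF (y + t *: d))).
Proof.
set p := y + t *: d.
have shiftE : (fun h : R => h^-1 *: (((fun s => F (y + s *: d)) \o shift t) (h *: 1)
                 - F (y + t *: d)))
            = (fun h : R => h^-1 *: ((F \o shift p) (h *: d) - F p)).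
  by apply: funext => h /=; rewrite /p [h *: 1]mulr1 scalerDl addrCA addrC.
have [dF dFE] := F_grad p.
apply: DeriveDef.
  by have := @diff_derivable _ _ _ F p d dF; rewrite /derivable -shiftE.
by rewrite /derive shiftE -/(derive F p d) deriveE // dFE.
Qed.

(* Mean value theorem for [t |-> F (y + t d) - t <d, gF y> - s t^2 <d, d> / 2] on [0, 1]. *)
Lemma mvt_along (y d : 'rV[R]_n) (s : R) :
  exists2 xi, xi \in `]0, 1[%R &
  F (y + d) - F y - dotv d (gF y) - s * (dotv d d / 2)
   = dotv d (gF (y + xi *: d) - gF y) - s * xi * dotv d d.
Proof.
set c := dotv d (gF y); set e := dotv d d.
have lin_deriv (t : R) : is_derive t (1 : R) (c \*: (@idfun R)) (c *: 1).
  exact: is_deriveZ.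
have sq_deriv (t : R) : is_derive t (1 : R) ((s * e / 2) \*: ((@idfun R) * (@idfun R)))
     ((s * e / 2) *: (t *: 1 + t *: 1)).
  by apply: is_deriveZ; apply: is_deriveM.
have D (t : R) := is_deriveB (is_deriveB (is_derive_along y d t) (lin_deriv t)) (sq_deriv t).
have cont := @derivable_within_continuous _ _ _ `[0, 1]%R
  (fun t _ => @ex_derive _ _ _ _ _ _ _ (D t)).
have [xi xi01 mvtE] := MVT ltr01 (fun t _ => D t) cont.
exists xi => //; move: mvtE; rewrite !fctE /= scale1r scale0r addr0 dotvBr.
rewrite /GRing.scale /= -/c -/e; lra.
Qed.

Hypothesis gF_lip : one_smooth gF.

Lemma dotv_grad_lip (x y : 'rV[R]_n) :
  dotv (gF x - gF y) (gF x - gF y) <= dotv (x - y) (x - y).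
Proof. by rewrite -!sqr_enorm lerXn2r ?nnegrE ?sqrtr_ge0 ?gF_lip. Qed.

Lemma dotv_grad_along_lip (y d : 'rV[R]_n) (xi : R) :
  let w := gF (y + xi *: d) - gF y in dotv w w <= xi ^+ 2 * dotv d d.
Proof.
apply: le_trans (dotv_grad_lip _ _) _.
by rewrite addrC addKr dotvZl dotvZr mulrA expr2.
Qed.

Lemma smooth_upper (y d : 'rV[R]_n) :
  F (y + d) <= F y + dotv d (gF y) + dotv d d / 2.
Proof.
have [xi xi01 mvtE] := mvt_along y d 1.
have xi_gt0 : 0 < xi by rewrite (itvP xi01).
have := dotv_le_of_dotvv_le xi_gt0 (dotv_grad_along_lip y d xi).
lra.
Qed.

Lemma smooth_lower (y d : 'rV[R]_n) :
  F y + dotv d (gF y) - dotv d d / 2 <= F (y + d).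
Proof.
have [xi xi01 mvtE] := mvt_along y d (-1).
have xi_gt0 : 0 < xi by rewrite (itvP xi01).
have := @dotv_le_of_dotvv_le _ _ d (- (gF (y + xi *: d) - gF y)) _ xi_gt0.
rewrite dotvNl dotvNr opprK dotvNr => /(_ (dotv_grad_along_lip y d xi)).
lra.
Qed.

Lemma grad_eq0_of_min (xs : 'rV[R]_n) : (forall y, F xs <= F y) -> gF xs = 0.
Proof.
move=> xs_min; apply: dotvv_eq0.
have := smooth_upper xs (- gF xs); have := xs_min (xs - gF xs).
have := dotvv_ge0 (gF xs); rewrite dotvNl dotvNr dotvNl opprK; lra.
Qed.

Hypothesis F_convex : convex_fun F.

(* Convexity gives [F (y + t d) - F y <= t (F z - F y)] and smoothness bounds the left side below
   by [t <d, gF y> - t^2 <d, d> / 2]; then let [t] go to [0]. *)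
Lemma convex_grad_ineq (y z : 'rV[R]_n) : F y + dotv (z - y) (gF y) <= F z.
Proof.
set d := z - y; set c := dotv d (gF y); set e := dotv d d.
have e_ge0 : 0 <= e := dotvv_ge0 d.
apply/ler_addgt0Pr => eps eps_gt0.
set t := eps / (eps + e).
have epse_gt0 : 0 < eps + e by lra.
have t_gt0 : 0 < t by rewrite divr_gt0.
have t_le1 : t <= 1 by rewrite ler_pdivrMr // mul1r; lra.
have te_le : t * e <= eps by rewrite mulrAC ler_pdivrMr //; nra.
have conv : F (y + t *: d) <= (1 - t) * F y + t * F z.
  have -> : y + t *: d = (1 - t) *: y + t *: z.
    by rewrite /d scalerBr scalerBl scale1r addrAC addrA.
  by apply: F_convex; rewrite (ltW t_gt0) t_le1.
have := smooth_lower y (t *: d); rewrite !dotvZl dotvZr -/c -/e => low.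
have : t * (c - t * e / 2) <= t * (F z - F y) by lra.
rewrite ler_pM2l //; lra.
Qed.

(* [Q_ij] of the paper; its nonnegativity for all pairs characterizes smooth convex functions. *)
Definition interp_gap (x y : 'rV[R]_n) : R :=
  F x - F y - dotv (gF y) (x - y) - dotv (gF x - gF y) (gF x - gF y) / 2.

Lemma interp_gap_ge0 (x y : 'rV[R]_n) : 0 <= interp_gap x y.
Proof.
set w := gF x - gF y.
have wE : dotv w w = dotv w (gF x) - dotv w (gF y) by rewrite {2}/w dotvBr.
have := convex_grad_ineq y (x - w); have := smooth_upper x (- w).
rewrite /interp_gap -/w; clearbody w.
rewrite !(dotvBl, dotvNl, dotvNr, opprK, dotvBr) (dotvC (gF y) x) (dotvC (gF y) y).
lra.
Qed.

End SmoothConvex.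

Section Iterates.
Variables (R : realType) (n : nat) (gF : 'rV[R]_n -> 'rV[R]_n).
Implicit Types (h : seq R) (m : R) (x : 'rV[R]_n).

Definition gd_step m x := x - m *: gF x.

Definition gd_last h x := gd_iter gF h x (size h).

Lemma gd_iter_cons m h x i :
  gd_iter gF (m :: h) x i.+1 = gd_iter gF h (gd_step m x) i.
Proof. by elim: i => [//|i /= ->]. Qed.

Lemma gd_last_cons m h x : gd_last (m :: h) x = gd_last h (gd_step m x).
Proof. exact: gd_iter_cons. Qed.

Lemma gd_last_cat h1 h2 x : gd_last (h1 ++ h2) x = gd_last h2 (gd_last h1 x).
Proof. by elim: h1 x => [//|m h1 IH] x; rewrite cat_cons !gd_last_cons IH. Qed.

Definition gd_sum (phi : R -> 'rV[R]_n -> R) h x : R :=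
  \sum_(0 <= i < size h) phi h`_i (gd_iter gF h x i).

Lemma gd_sum_nil phi x : gd_sum phi [::] x = 0.
Proof. by rewrite /gd_sum big_geq. Qed.

Lemma gd_sum_cons phi m h x :
  gd_sum phi (m :: h) x = phi m x + gd_sum phi h (gd_step m x).
Proof.
rewrite /gd_sum big_nat_recl //=; congr (_ + _).
by apply: eq_big_nat => i _; rewrite -gd_iter_cons.
Qed.

Lemma gd_sum_cat phi h1 h2 x :
  gd_sum phi (h1 ++ h2) x = gd_sum phi h1 x + gd_sum phi h2 (gd_last h1 x).
Proof.
elim: h1 x => [|m h1 IH] x; first by rewrite gd_sum_nil add0r.
by rewrite cat_cons !gd_sum_cons IH gd_last_cons addrA.
Qed.

End Iterates.

Section StepTotal.
Variable R : realType.
Implicit Types (m : R) (h : seq R).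

Definition step_total h : R := \sum_(t <- h) t.

Lemma step_total_nil : step_total [::] = 0.
Proof. exact: big_nil. Qed.

Lemma step_total_cons m h : step_total (m :: h) = m + step_total h.
Proof. exact: big_cons. Qed.

Lemma step_total_cat h1 h2 : step_total (h1 ++ h2) = step_total h1 + step_total h2.
Proof. exact: big_cat. Qed.

Lemma step_total_ge0 h : all (fun t => 0 <= t) h -> 0 <= step_total h.
Proof. by rewrite /step_total big_seq => /allP h_ge0; apply: sumr_ge0. Qed.

End StepTotal.

Section Certificate.
Variables (R : realType) (n : nat) (F : 'rV[R]_n -> R) (gF : 'rV[R]_n -> 'rV[R]_n).
Implicit Types (h : seq R) (x z : 'rV[R]_n).
Local Notation Q := (interp_gap F gF).
Local Notation gsq x := (dotv (gF x) (gF x)).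
Local Notation xlast h x := (gd_last gF h x).

Definition interp_sum h x z := gd_sum gF (fun t y => t * Q z y) h x.
Definition fsum h x := gd_sum gF (fun t y => t * F y) h x.
Definition gsum h x := gd_sum gF (fun t y => t * gsq y) h x.
Definition gsum2 h x := gd_sum gF (fun t y => t ^+ 2 * gsq y) h x.

Lemma interp_sumE h x z :
  interp_sum h x z = step_total h * F z - fsum h x
   + (dotv x x - dotv (xlast h x) (xlast h x) + gsum2 h x) / 2
   - dotv (x - xlast h x) z
   - (step_total h * gsq z - 2 * dotv (gF z) (x - xlast h x) + gsum h x) / 2.
Proof.
elim: h x => [|m h IH] x.
  rewrite /interp_sum /fsum /gsum /gsum2 !gd_sum_nil step_total_nil /gd_last /=.
  by rewrite !subrr dotv0l dotv0r; lra.
rewrite /interp_sum /fsum /gsum /gsum2 !gd_sum_cons step_total_cons gd_last_cons.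
rewrite -/(interp_sum _ _ _) -/(fsum _ _) -/(gsum _ _) -/(gsum2 _ _).
rewrite IH /interp_gap /gd_step.
set y := xlast h _; set g := gF x.
rewrite !(dotvBl, dotvBr, dotvZl, dotvZr, dotvNl, dotvNr).
rewrite (dotvC g x) (dotvC g z) (dotvC y z) (dotvC (gF z) g) (dotvC x z).
lra.
Qed.

Definition certificate h x := fsum h x - step_total h * F (xlast h x)
  - (gsum2 h x - gsum h x) / 2
  - step_total h * (step_total h + 1) / 2 * gsq (xlast h x).

Lemma certificate_nil x : certificate [::] x = 0.
Proof.
by rewrite /certificate /fsum /gsum /gsum2 !gd_sum_nil step_total_nil; lra.
Qed.

Lemma certificate_cat_cons a b m rho r x :
  rho * rho = 2 * rho + 1 -> step_total a = r - 1 -> step_total b = r - 1 ->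
  m = 1 + r * (rho - 2) ->
  let xm := xlast a x in let y := gd_step gF m xm in let xn := xlast b y in
  certificate (a ++ m :: b) x = certificate a x + rho * rho * certificate b y
    + rho * (interp_sum b y xm + interp_sum b y xn) + rho * Q xm xn + r * Q xn xm.
Proof.
move=> rhoE a_total b_total mE xm y xn.
rewrite /certificate /fsum /gsum /gsum2 !gd_sum_cat !gd_sum_cons.
rewrite step_total_cat step_total_cons gd_last_cat gd_last_cons.
rewrite -!/(fsum _ _) -!/(gsum _ _) -!/(gsum2 _ _) -/xm -/y -/xn.
rewrite !interp_sumE -/xn a_total b_total /interp_gap /y /gd_step.
set gm := gF xm; set gn := gF xn.
set Fa := fsum a x; set Fb := fsum b y; set G1a := gsum a x; set G2a := gsum2 a x.
set G1b := gsum b y; set G2b := gsum2 b y.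
rewrite !(dotvBl, dotvBr, dotvZl, dotvZr, dotvNl, dotvNr).
rewrite ?(dotvC gm xm) ?(dotvC xn xm) ?(dotvC gn xm) ?(dotvC xn gm)
  ?(dotvC gn gm) ?(dotvC gn xn).
rewrite mE; clearbody Fa Fb G1a G2a G1b G2b gm gn xn y xm.
(* The identity is polynomial in [rho] only modulo [rho^2 = 2 rho + 1]; [q] is the cofactor. *)
pose q := 3/2 * dotv gm gm * r^+2 - Fb + F xn * r - F xn + 1/2 * G2b - 1/2 * G1b
  - 1/2 * dotv gn gn * r - dotv gm gm * r^+2 * rho + dotv xm gm * r - dotv gm gm * r
  - dotv gm xn * r + dotv gm gn * r.
have addq0 (t : R) : t = t + q * (rho * rho - 2 * rho - 1).
  by rewrite rhoE; lra.
by rewrite [RHS]addq0 /q; lra.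
Qed.

End Certificate.

Section SilverSchedule.
Variable R : realType.
Local Notation rho := (@silver_ratio R).
Local Notation silver k := (silver_schedule k : seq R).

Lemma mul_sqrt2 : Num.sqrt (2 : R) * Num.sqrt 2 = 2.
Proof. by rewrite -expr2 sqr_sqrtr ?ler0n. Qed.

Lemma silver_ratio_sqr : rho * rho = 2 * rho + 1.
Proof. by rewrite /silver_ratio; have := mul_sqrt2; lra. Qed.

Lemma silver_ratio_ge2 : 2 <= rho.
Proof. by rewrite /silver_ratio; have := mul_sqrt2; have := sqrtr_ge0 (2 : R); nra. Qed.

Lemma silver_ratio_mulB2 : rho * (rho - 2) = 1.
Proof. by rewrite mulrBr silver_ratio_sqr; lra. Qed.

(* Uniform recursion: the middle step [1 + rho^(k-1)] of [pi_(k+1)] equals [1 + rho^k (rho - 2)],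
   which for [k = 0] is [sqrt 2]. *)
Lemma silver_schedule_rec k :
  silver k.+1 = silver k ++ (1 + rho ^+ k * (rho - 2)) :: silver k.
Proof.
case: k => [|k]; first by rewrite expr0 mul1r /silver_ratio /=; congr [:: _]; lra.
by rewrite exprS -mulrA (mulrC (rho ^+ k)) mulrA silver_ratio_mulB2 mul1r.
Qed.

Lemma size_silver_schedule k : size (silver k) = (2 ^ k - 1)%N.
Proof.
elim: k => [//|k IH]; rewrite silver_schedule_rec size_cat /= IH expnS.
by have := expn_gt0 2 k; lia.
Qed.

Lemma step_total_silver k : step_total (silver k) = rho ^+ k - 1.
Proof.
elim: k => [|k IH]; first by rewrite step_total_nil expr0 subrr.
by rewrite silver_schedule_rec step_total_cat step_total_cons IH exprS; lra.
Qed.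

Lemma silver_schedule_ge0 k : all (fun t => 0 <= t) (silver k).
Proof.
elim: k => [//|k IH]; rewrite silver_schedule_rec all_cat IH /= IH andbT.
have rhok_ge0 : 0 <= rho ^+ k by rewrite exprn_ge0 // (le_trans _ silver_ratio_ge2).
by have := silver_ratio_ge2; nra.
Qed.

End SilverSchedule.

Section Rate.
Variables (R : realType) (n : nat) (F : 'rV[R]_n -> R) (gF : 'rV[R]_n -> 'rV[R]_n).
Hypothesis gap_ge0 : forall x y, 0 <= interp_gap F gF x y.
Local Notation rho := (@silver_ratio R).

Lemma interp_sum_ge0 (h : seq R) x z :
  all (fun t => 0 <= t) h -> 0 <= interp_sum F gF h x z.
Proof.
elim: h x => [|m h IH] x; first by rewrite /interp_sum gd_sum_nil.
case/andP=> m_ge0 h_ge0.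
by rewrite /interp_sum gd_sum_cons addr_ge0 ?mulr_ge0 ?IH.
Qed.

Lemma certificate_silver_ge0 k x : 0 <= certificate F gF (silver_schedule k) x.
Proof.
elim: k x => [|k IH] x; first by rewrite certificate_nil.
have rho_ge0 : 0 <= rho by rewrite (le_trans _ (silver_ratio_ge2 R)).
have rhok_ge0 : 0 <= rho ^+ k by rewrite exprn_ge0.
rewrite silver_schedule_rec (certificate_cat_cons F gF x (silver_ratio_sqr R)
  (step_total_silver R k) (step_total_silver R k) erefl) /=.
have := silver_schedule_ge0 R k => silver_ge0.
apply: addr_ge0; last exact: mulr_ge0 rhok_ge0 (gap_ge0 _ _).
apply: addr_ge0; last exact: mulr_ge0 rho_ge0 (gap_ge0 _ _).
apply: addr_ge0; last by rewrite mulr_ge0 // addr_ge0 // interp_sum_ge0.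
by rewrite addr_ge0 ?mulr_ge0 ?IH.
Qed.

(* Sum the certificate, the interpolation sum at [xs], [(alpha + 1) Q xs xN], and the square
   [|xN - xs - (alpha + 1) gF xN|^2 / 2], all nonnegative. *)
Lemma rate_of_certificate (h : seq R) x xs :
  gF xs = 0 -> 0 <= certificate F gF h x -> all (fun t => 0 <= t) h ->
  (2 * step_total h + 1) * (F (gd_last gF h x) - F xs) <= dotv (x - xs) (x - xs) / 2.
Proof.
move=> g0 cert_ge0 h_ge0.
have alpha1_ge0 : 0 <= step_total h + 1 by rewrite addr_ge0 ?step_total_ge0.
have := interp_sum_ge0 x xs h_ge0; rewrite interp_sumE g0.
have := mulr_ge0 alpha1_ge0 (gap_ge0 xs (gd_last gF h x)); rewrite /interp_gap g0.
move: cert_ge0; rewrite /certificate.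
set xN := gd_last gF h x; set A := step_total h.
have := dotvv_ge0 (xN - xs - (A + 1) *: gF xN).
set gN := gF xN; set SF := fsum F gF h x; set G1 := gsum gF h x; set G2 := gsum2 gF h x.
clearbody SF G1 G2 A gN xN.
rewrite !(dotvBl, dotvBr, dotvZl, dotvZr, dotvNl, dotvNr, dotv0l, dotv0r).
rewrite ?(dotvC xs x) ?(dotvC xN x) ?(dotvC gN x) ?(dotvC xN xs) ?(dotvC gN xs)
  ?(dotvC gN xN).
lra.
Qed.

End Rate.

Theorem theorem4 (R : realType) (n : nat) (F : 'rV[R]_n -> R)
  (gF : 'rV[R]_n -> 'rV[R]_n) (xstar x0 : 'rV[R]_n) (k : nat) :
  has_gradient F gF -> convex_fun F -> one_smooth gF ->
  (forall y, F xstar <= F y) ->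
  (1 <= k)%N ->
  F (gd_iter gF (silver_schedule k) x0 (2 ^ k - 1)%N) - F xstar
    <= (4 * silver_ratio ^+ k - 2)^-1 * enorm (x0 - xstar) ^+ 2.
Proof.
move=> F_grad F_convex gF_lip xstar_min _.
have gap_ge0 := interp_gap_ge0 F_grad gF_lip F_convex.
have := rate_of_certificate gap_ge0 (grad_eq0_of_min F_grad gF_lip xstar_min)
  (certificate_silver_ge0 gap_ge0 k x0) (silver_schedule_ge0 R k).
rewrite step_total_silver -sqr_enorm /gd_last size_silver_schedule.
have rhok_ge1 : 1 <= silver_ratio ^+ k :> R.
  by rewrite exprn_ege1 // (le_trans _ (silver_ratio_ge2 R)) // ler1n.
by move=> bound; rewrite ler_pdivlMl; lra.
Qed.
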